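(* Let $1\le r<m$ and $0<\varepsilon<1$. (a) For every $g\in[1,m-r]$ and every $\xi\in\Gamma^g$, $\mu(\xi)\le\mu(\xi_*^g)$, where $\xi_*^g=(0^{r-1},1^{m-r-g},0,1^g)\in\Gamma^g$. (b) For every left-end path $\xi\in\Gamma$, $\mu(\xi)\le\mu(\xi_* )$ where $\xi_*=(0^r,1^{m-r})$; and for every right-end path in $\Gamma$ with end subpath $\underline\xi$, $\mu(\underline\xi)\le\mu(\xi_* )$. Thus $\xi_*$ is the weakest path of $\Gamma$ and $\xi_*^g$ is the weakest path of $\Gamma^g$.
   Context: $\mu$ is defined on finite binary strings by $\mu(\varnothing)=\varepsilon^{-2}-1$, $\mu(\zeta,0)=(\mu(\zeta)+1)^2-1$, $\mu(\zeta,1)=\mu(\zeta)/2$. Paths: start at node $(m,r)$; a step $0$ moves $(m',r')\to(m'-1,r'-1)$, a step $1$ moves $(m',r')\to(m'-1,r')$; the walk (end subpath) stops as soon as it reaches a node $(g,0)$ with $g\ge1$ (left end) or $(h,h)$ with $h\ge1$ (right end). A left-end path is an end subpath ending at $(g,0)$ followed by $1^g$ (length $m$); a right-end path is an end subpath ending at $(h,h)$ followed by any $h$ bits. $\Gamma$, the set of all such paths, is exactly the set of binary strings of length $m$ with Hamming weight $\ge m-r$. $\Gamma^g\subseteq\Gamma$ is the set of left-end paths whose end subpath ends at $(g,0)$, i.e. strings $(\zeta,0,1^g)$ where $\zeta$ has length $m-g-1$ and exactly $r-1$ zeros. *)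

From HB Require Import structures.
From mathcomp Require Import all_boot all_order all_algebra.
Set Implicit Arguments. Unset Strict Implicit. Unset Printing Implicit Defensive.
Import Order.TTheory GRing.Theory Num.Theory.

(* Binary strings: bit 0 = false, bit 1 = true. *)

Definition mu_step (R : realFieldType) (x : R) (b : bool) : R :=
  (if b then x / 2%:R else (x + 1) ^+ 2 - 1)%R.

Definition mu (R : realFieldType) (eps : R) (s : seq bool) : R :=
  foldl (@mu_step R) (eps ^- 2 - 1)%R s.

Definition is_end_node (a b : nat) : bool :=
  ((b == 0) && (1 <= a)) || ((a == b) && (1 <= a)).

Fixpoint walk (a b : nat) (s : seq bool) : option (seq bool * (nat * nat)) :=
  if is_end_node a b then Some ([::], (a, b)) else
  match s with
  | [::] => None
  | x :: s' =>
      match walk a.-1 (if x then b else b.-1) s' with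
      | Some (u, e) => Some (x :: u, e)
      | None => None
      end
  end.

Definition in_Gamma_g (m r g : nat) (xi : seq bool) : Prop :=
  1 <= g /\ size xi = m /\
  exists u, walk m r xi = Some (u, (g, 0)) /\ xi = u ++ nseq g true.

Definition is_left_end_path (m r : nat) (xi : seq bool) : Prop :=
  exists g, in_Gamma_g m r g xi.

Definition is_right_end_path_with (m r : nat) (xi u : seq bool) : Prop :=
  size xi = m /\ exists h, 1 <= h /\ walk m r xi = Some (u, (h, h)).

Definition xi_star_g (m r g : nat) : seq bool :=
  nseq (r - 1) false ++ nseq (m - r - g) true ++ [:: false] ++ nseq g true.

Definition xi_star (m r : nat) : seq bool :=
  nseq r false ++ nseq (m - r) true.

From HB Require Import structures.
From mathcomp Require Import all_boot all_order all_algebra.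
From mathcomp Require Import zify lra.
Import Order.TTheory GRing.Theory Num.Theory.
Local Open Scope ring_scope.

(* Along any path of Gamma the bit counts are fixed by the end node, so mu is
   maximised by moving all 0-steps to the front: on nonnegative values the
   block "0 then 1" yields x^2/2 + x while "1 then 0" yields x^2/4 + x, and
   mu_step is monotone.  For (a), a path of Gamma^g is u' 0 1^g where u' has
   r-1 zeros; sorting u' gives exactly xi_*^g.  For right-end paths the end
   subpath has m-r ones and at most r zeros, and prepending zeros only
   increases mu. *)

Arguments mu_step : simpl never.

Section MuStep.
Variable R : realFieldType.
Local Notation mu_from := (foldl (@mu_step R)).

Lemma mu_step_ge0 {x : R} b : 0 <= x -> 0 <= mu_step x b.
Proof. by rewrite /mu_step; case: b => /= x0; nra. Qed.

Lemma mu_from_ge0 s (x : R) : 0 <= x -> 0 <= mu_from x s.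
Proof. by elim: s x => [|b s IHs] x x0 //=; apply/IHs/mu_step_ge0. Qed.

Lemma mu_from_le s (x y : R) : 0 <= x -> x <= y -> mu_from x s <= mu_from y s.
Proof.
elim: s x y => [|b s IHs] x y x0 xy //=.
by apply: IHs; [exact: mu_step_ge0 | rewrite /mu_step; case: b; nra].
Qed.

Lemma mu_from_zeros_ge k (x : R) : 0 <= x -> x <= mu_from x (nseq k false).
Proof.
elim: k x => [|k IHk] x x0 //=.
have x_le : x <= mu_step x false by rewrite /mu_step; nra.
by apply: le_trans x_le _; apply/IHk/mu_step_ge0.
Qed.

Lemma mu_from_one_zeros_le k t (x : R) : 0 <= x ->
  mu_from x (true :: nseq k false ++ t) <= mu_from x (nseq k false ++ true :: t).
Proof.
elim: k x => [|k IHk] x x0 //=.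
apply: le_trans (IHk _ (mu_step_ge0 false x0)).
apply: mu_from_le; first by do 2!apply: mu_step_ge0.
by rewrite /mu_step; nra.
Qed.

Lemma mu_from_le_sorted s (x : R) : 0 <= x ->
  mu_from x s <= mu_from x (nseq (count negb s) false ++ nseq (count id s) true).
Proof.
elim: s x => [|[] s IHs] x x0 //=; rewrite !add0n.
  apply: le_trans (IHs _ (mu_step_ge0 true x0)) _.
  exact: mu_from_one_zeros_le.
exact: IHs (mu_step_ge0 false x0).
Qed.

End MuStep.

Lemma mu_nil_ge0 (R : realFieldType) (eps : R) :
  0 < eps -> eps <= 1 -> 0 <= mu eps [::].
Proof.
move=> eps_gt0 eps_le1; rewrite /mu /= subr_ge0 invf_ge1 ?exprn_gt0 //.
by rewrite expr2; nra.
Qed.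

Lemma mu_le_sorted {R : realFieldType} {eps : R} s : 0 < eps -> eps <= 1 ->
  mu eps s <= mu eps (nseq (count negb s) false ++ nseq (count id s) true).
Proof. by move=> eps_gt0 eps_le1; apply/mu_from_le_sorted/mu_nil_ge0. Qed.

Lemma count_id_negb (s : seq bool) : (count id s + count negb s = size s)%N.
Proof. exact: count_predC. Qed.

Lemma walk_Some {a b s u c d} : walk a b s = Some (u, (c, d)) ->
  [/\ is_end_node c d, a = (c + size u)%N & b = (d + count negb u)%N].
Proof.
elim: s a b u => [|x s IHs] a b u /=.
  by case: ifP => // ab_end [<- <- <-]; rewrite !addn0.
case: ifP => ab_end; first by move=> [<- <- <-]; rewrite !addn0.
case Hw: walk => [[u' [c' d']]|] //= [<- Ec Ed]; subst c' d'.
have [cd_end Ea Eb] := IHs _ _ _ Hw.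
have c_gt0 : (0 < c)%N by case/orP: cd_end => /andP[].
by split=> //=; move: ab_end; rewrite /is_end_node; case: x Eb {Hw} => /= Eb; lia.
Qed.

(* (c.+1, if x then d else d.+1) is the node before the last step; the walk
   stops at the first end node, so it is not one. *)
Lemma walk_last_step {a b s u x c d} : walk a b s = Some (rcons u x, (c, d)) ->
  ~~ is_end_node c.+1 (if x then d else d.+1).
Proof.
elim: s a b u => [|y s IHs] a b u /=.
  by case: ifP => // _ [] /(congr1 size); rewrite size_rcons.
case: ifP => a_b_end; first by move=> [] /(congr1 size); rewrite size_rcons.
case Hw: walk => [[w [c' d']]|] //= [Ew Ec Ed]; subst c' d'.
case: u Ew => [|z u] /= [Eyx Ew]; subst w; last exact: IHs Hw.
subst y; have [cd_end Ea Eb] := walk_Some Hw.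
have c_gt0 : (0 < c)%N by case/orP: cd_end => /andP[].
by move: a_b_end; rewrite /is_end_node; case: x Ea Eb {IHs Hw} => /= Ea Eb; lia.
Qed.

Lemma walk_left_end_last_zero {a b s u g} : (0 < b)%N ->
  walk a b s = Some (u, (g, 0%N)) -> exists u', u = rcons u' false.
Proof.
move=> b_gt0 Hw; have [_ _ Eb] := walk_Some Hw.
case/lastP: u Hw Eb => [|u' [] Hw _]; [by move=> _ /=; lia | | by exists u'].
by move: (walk_last_step Hw); rewrite /is_end_node.
Qed.

Lemma walk_zeros k a b t : (k <= b)%N -> (b < a)%N ->
  walk a b (nseq k false ++ t) =
  omap (fun p => (nseq k false ++ p.1, p.2)) (walk (a - k) (b - k) t).
Proof.
elim: k a b => [|k IHk] a b k_le b_lt /=; first by rewrite !subn0; case: walk => [[]|].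
have -> : is_end_node a b = false by apply/negbTE; rewrite /is_end_node; lia.
rewrite IHk; try lia.
by rewrite !subnS !predn_sub; case: walk => [[]|].
Qed.

Lemma walk_ones k a b t : (0 < b)%N -> (b + k <= a)%N ->
  walk a b (nseq k true ++ t) =
  omap (fun p => (nseq k true ++ p.1, p.2)) (walk (a - k) b t).
Proof.
elim: k a => [|k IHk] a b_gt0 bk_le /=; first by rewrite !subn0; case: walk => [[]|].
have -> : is_end_node a b = false by apply/negbTE; rewrite /is_end_node; lia.
rewrite IHk; try lia.
by rewrite subnS predn_sub; case: walk => [[]|].
Qed.

Section Gamma.
Variables (m r : nat).
Hypotheses (r_gt0 : (0 < r)%N) (r_lt_m : (r < m)%N).

Lemma xi_star_g_in_Gamma_g g : (1 <= g <= m - r)%N -> in_Gamma_g m r g (xi_star_g m r g).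
Proof.
case/andP=> g_gt0 g_le; split=> //; split.
  by rewrite /xi_star_g !size_cat !size_nseq /=; lia.
exists (nseq (r - 1) false ++ nseq (m - r - g) true ++ [:: false]).
split; last by rewrite /xi_star_g !catA.
rewrite /xi_star_g walk_zeros ?walk_ones; try lia.
have -> : (m - (r - 1) - (m - r - g) = g.+1)%N by lia.
have -> : (r - (r - 1) = 1)%N by lia.
by case: g g_gt0 {g_le} => //= g _; rewrite /is_end_node /= !cats0; case: g.
Qed.

Lemma xi_star_left_end : is_left_end_path m r (xi_star m r).
Proof.
exists (m - r)%N; split; first lia.
split; first by rewrite /xi_star size_cat !size_nseq; lia.
exists (nseq r false); split; last by [].
rewrite /xi_star walk_zeros ?subnn; try lia.
have [n ->] : exists n, (m - r)%N = n.+1 by exists (m - r).-1; lia.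
by rewrite /= cats0.
Qed.

Variables (R : realFieldType) (eps : R).
Hypotheses (eps_gt0 : 0 < eps) (eps_le1 : eps <= 1).

Lemma mu_Gamma_g_le g xi : in_Gamma_g m r g xi -> mu eps xi <= mu eps (xi_star_g m r g).
Proof.
move=> [_ [_ [u [Hw ->]]]].
have [u' Eu] := walk_left_end_last_zero r_gt0 Hw; have [_ Em Er] := walk_Some Hw.
rewrite Eu size_rcons -cats1 count_cat /= in Em Er.
have count_u' := count_id_negb u'.
rewrite Eu cat_rcons /mu foldl_cat /xi_star_g catA foldl_cat.
apply: mu_from_le; first exact/mu_from_ge0/mu_nil_ge0.
have := mu_le_sorted u' eps_gt0 eps_le1.
have -> : count negb u' = (r - 1)%N by lia.
by have -> : count id u' = (m - r - g)%N by lia.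
Qed.

Lemma mu_left_end_le xi : is_left_end_path m r xi -> mu eps xi <= mu eps (xi_star m r).
Proof.
move=> [g [_ [size_xi [u [Hw Exi]]]]]; have [_ _ Er] := walk_Some Hw.
have count_xi := count_id_negb xi.
have negb_xi : count negb xi = r by rewrite Exi count_cat count_nseq /= mul0n addn0 Er.
apply: le_trans (mu_le_sorted _ eps_gt0 eps_le1) _.
by rewrite negb_xi /xi_star; have -> : count id xi = (m - r)%N by lia.
Qed.

Lemma mu_right_end_le xi u : is_right_end_path_with m r xi u -> mu eps u <= mu eps (xi_star m r).
Proof.
move=> [_ [h [_ Hw]]]; have [_ Em Er] := walk_Some Hw.
have count_u := count_id_negb u.
apply: le_trans (mu_le_sorted _ eps_gt0 eps_le1) _.
have -> : count id u = (m - r)%N by lia.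
have -> : xi_star m r =
    nseq (r - count negb u) false ++ nseq (count negb u) false ++ nseq (m - r) true.
  by rewrite /xi_star catA -nseqD; congr (nseq _ _ ++ _); lia.
rewrite /mu [X in _ <= X]foldl_cat.
apply: mu_from_le; first exact: mu_nil_ge0.
exact/mu_from_zeros_ge/mu_nil_ge0.
Qed.

End Gamma.

Theorem lemma8 (R : realFieldType) (m r : nat) (eps : R) :
  (1 <= r)%N -> (r < m)%N -> 0 < eps -> eps < 1 ->
  (* (a) *)
  (forall g : nat, (1 <= g <= m - r)%N ->
     in_Gamma_g m r g (xi_star_g m r g) /\
     (forall xi, in_Gamma_g m r g xi -> mu eps xi <= mu eps (xi_star_g m r g)))
  /\
  (* (b) *)
  (is_left_end_path m r (xi_star m r) /\
   (forall xi, is_left_end_path m r xi -> mu eps xi <= mu eps (xi_star m r)) /\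
   (forall xi u, is_right_end_path_with m r xi u -> mu eps u <= mu eps (xi_star m r))).
Proof.
move=> r_gt0 r_lt_m eps_gt0 /ltW eps_le1.
split=> [g g_range|].
  split; first exact: xi_star_g_in_Gamma_g.
  by move=> xi; apply: mu_Gamma_g_le.
split; first exact: xi_star_left_end.
split=> [xi|xi u]; [exact: mu_left_end_le | exact: mu_right_end_le].
Qed.
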